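(* Let $N,d\ge1$, $\lambda,\tau>0$ with $\lambda\tau\le\frac12$, and let $\psi:[0,\infty)\to(0,\infty)$ be positive, nonincreasing, differentiable with $\psi(r)\le1$ for all $r\ge0$. Let $(x_i,v_i)_{i=1}^N$ solve $$\dot x_i(t)=v_i(t),\qquad \dot v_i(t)=\frac{\lambda}{N}\sum_{j=1}^N\psi(|x_i(t-\tau)-x_j(t-\tau)|)\,(v_j(t-\tau)-v_i(t-\tau)),\qquad t>0,$$ with initial data $(x_i,v_i)=(x_i^0,v_i^0)$ on $[-\tau,0]$, $(x_i^0,v_i^0)\in C([-\tau,0];\mathbb{R}^{2d})\cap C^1((-\tau,0);\mathbb{R}^{2d})$. Then $$\varphi(t)\ge\psi\big(d_X(0)+\sqrt{2L^0}\,t\big)\qquad\text{for all }t>\tau.$$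
   Context: $\varphi(t):=\min_{i,j}\psi(|x_i(t)-x_j(t)|)$ and $d_X(t):=\max_{i,j}|x_i(t)-x_j(t)|$. $V(t):=\frac12\sum_{i,j=1}^N|v_i(t)-v_j(t)|^2$, $D(t):=\frac12\sum_{i,j=1}^N\psi(|x_i(t)-x_j(t)|)\,|v_j(t)-v_i(t)|^2$, and $L^0:=(2\lambda\tau+1)e^{2\lambda\tau}\max_{\vartheta\in[-\tau,0]}V(\vartheta)+4\tau\lambda^3\int_{-\tau}^0\int_\theta^0 D(s)\,ds\,d\theta$. *)

From HB Require Import structures.
From mathcomp Require Import all_boot all_order all_algebra.
From mathcomp Require Import all_classical all_reals all_analysis.
Set Implicit Arguments. Unset Strict Implicit. Unset Printing Implicit Defensive.
Import Order.TTheory GRing.Theory Num.Theory.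
Import numFieldNormedType.Exports.
Local Open Scope classical_set_scope.
Local Open Scope ring_scope.

Definition enorm {R : realType} {d : nat} (u : 'I_d -> R) : R :=
  Num.sqrt (\sum_(k < d) u k ^+ 2).

Section CS.
Variables (R : realType) (N d : nat).
(* x i k t : k-th coordinate of the position of particle i at time t *)
Variables (x v : 'I_N -> 'I_d -> R -> R).

Definition posdiff (i j : 'I_N) (t : R) : 'I_d -> R := fun k => x i k t - x j k t.
Definition veldiff (i j : 'I_N) (t : R) : 'I_d -> R := fun k => v i k t - v j k t.

(* phi(t) = min_{i,j} psi(|x_i(t) - x_j(t)|); the neutral element 1 is harmless
   since the range contains i = j (N >= 1) and psi <= 1. *)
Definition phiCS (psi : R -> R) (t : R) : R :=
  \big[Num.min/1]_(i < N) \big[Num.min/1]_(j < N) psi (enorm (posdiff i j t)).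

(* d_X(t) = max_{i,j} |x_i(t) - x_j(t)| (neutral 0 harmless, norms >= 0). *)
Definition dX (t : R) : R :=
  \big[Num.max/0]_(i < N) \big[Num.max/0]_(j < N) enorm (posdiff i j t).

Definition VCS (t : R) : R :=
  2^-1 * \sum_(i < N) \sum_(j < N) enorm (veldiff i j t) ^+ 2.

Definition DCS (psi : R -> R) (t : R) : R :=
  2^-1 * \sum_(i < N) \sum_(j < N)
     psi (enorm (posdiff i j t)) * enorm (veldiff j i t) ^+ 2.

(* L^0; the max over [-tau,0] of the continuous function V is written as a sup. *)
Definition L0 (psi : R -> R) (lambda tau : R) : R :=
  (2 * lambda * tau + 1) * expR (2 * lambda * tau) * sup (VCS @` `[- tau, 0])
  + 4 * tau * lambda ^+ 3 *
    Rintegral lebesgue_measure `[- tau, 0]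
      (fun theta => Rintegral lebesgue_measure `[theta, 0] (DCS psi)).
End CS.

(* Let V be the velocity variance and M its maximum on [-tau, 0]. On [0, tau],
   the mean value theorem at a maximum point of V bounds V by (1 + 4 lambda tau) M.
   For t > tau, V plus 4 lambda^3 tau times a double integral of D(. - tau) over
   the last delay window is nonincreasing: the velocity increments over one delay
   are controlled by that window, so the derivative is at most
   (4 lambda^3 tau^2 - lambda) D(t - tau) <= 0. Hence V stays below
   (1 + 4 lambda tau + 4 (lambda tau)^3) M <= L^0, every relative velocity has
   norm at most sqrt(2 L^0), relative positions grow at most linearly, and psi
   is nonincreasing. *)

From HB Require Import structures.
From mathcomp Require Import all_boot all_order all_algebra.
From mathcomp Require Import all_classical all_reals all_analysis.
From mathcomp Require Import ring lra.
Set Implicit Arguments. Unset Strict Implicit. Unset Printing Implicit Defensive.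
Import Order.TTheory GRing.Theory Num.Theory.
Import numFieldNormedType.Exports.
Local Open Scope classical_set_scope.
Local Open Scope ring_scope.

Section within_continuity.
Context {R : realType}.
Implicit Types (A B : set R) (f g h : R -> R).

Lemma within_continuous_comp_sub A B f h :
  {within B, continuous f} -> {within A, continuous h} ->
  (forall y, A y -> B (h y)) -> {within A, continuous (f \o h)}.
Proof.
move=> /subspace_continuousP cf /subspace_continuousP ch AB.
apply/subspace_continuousP => x Ax.
have hB : h @ within A (nbhs x) --> within B (nbhs (h x)).
  move=> W /= WB; have := ch x Ax _ WB.
  rewrite /= !nbhs_simpl /within /=.
  by apply: filterS => y Wy Ay; exact: Wy (AB _ Ay).
exact: cvg_comp hB (cf (h x) (AB x Ax)).
Qed.

Lemma within_continuous_cst A (c : R) : {within A, continuous (fun=> c)}.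
Proof. by apply: continuous_subspaceT => x; exact: cst_continuous. Qed.

Lemma within_continuousM A f g : {within A, continuous f} ->
  {within A, continuous g} -> {within A, continuous (fun t => f t * g t)}.
Proof. by move=> cf cg x; apply: continuousM; [exact: cf|exact: cg]. Qed.

Lemma within_continuousMl A (c : R) f : {within A, continuous f} ->
  {within A, continuous (fun t => c * f t)}.
Proof. by move=> cf; apply: within_continuousM => //; exact: within_continuous_cst. Qed.

Lemma within_continuous_sqr A f : {within A, continuous f} ->
  {within A, continuous (fun t => f t ^+ 2)}.
Proof. by move=> cf; under eq_fun do rewrite expr2; exact: within_continuousM. Qed.

Lemma within_continuous_sum A n (F : 'I_n -> R -> R) :
  (forall i, {within A, continuous (F i)}) ->
  {within A, continuous (fun t => \sum_(i < n) F i t)}.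
Proof.
elim: n F => [|n IH] F cF.
  under eq_fun do rewrite big_ord0; exact: within_continuous_cst.
under eq_fun do rewrite big_ord_recr /=.
apply: within_continuousD; last exact: cF.
exact: (IH (fun i => F (widen_ord (leqnSn n) i))).
Qed.

Lemma within_continuous_sqrt A f : {within A, continuous f} ->
  {within A, continuous (fun t => Num.sqrt (f t))}.
Proof.
move=> cf; apply: (@within_continuous_comp_sub A setT (@Num.sqrt R) f) => //.
exact/continuous_subspaceT/sqrt_continuous.
Qed.

Lemma within_continuous_shift A B f (c : R) : {within B, continuous f} ->
  (forall y, A y -> B (y - c)) -> {within A, continuous (fun t => f (t - c))}.
Proof.
move=> cf AB; apply: (@within_continuous_comp_sub A B f (fun t => t - c)) => //.
apply: continuous_subspaceT => x; apply: continuousB => //; exact: cst_continuous.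
Qed.

End within_continuity.

Section derivatives.
Context {R : realType}.
Implicit Types (f g : R -> R).

Lemma is_derive_derive1 x f df :
  is_derive x (1 : R) f df -> derivable f x 1 /\ derive1 f x = df.
Proof. by move=> H; split; [exact: ex_derive|rewrite derive1E derive_val]. Qed.

Lemma derivable_is_derive1 x f : derivable f x 1 -> is_derive x (1 : R) f (derive1 f x).
Proof. by move=> H; rewrite derive1E; exact: derivableP. Qed.

Lemma is_derive_add x f g df dg : is_derive x (1 : R) f df -> is_derive x (1 : R) g dg ->
  is_derive x (1 : R) (fun t => f t + g t) (df + dg).
Proof. by move=> Hf Hg; exact: is_deriveD. Qed.

Lemma is_derive_sub x f g df dg : is_derive x (1 : R) f df -> is_derive x (1 : R) g dg ->
  is_derive x (1 : R) (fun t => f t - g t) (df - dg).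
Proof. by move=> Hf Hg; exact: is_deriveB. Qed.

Lemma is_derive_mul x f g df dg : is_derive x (1 : R) f df -> is_derive x (1 : R) g dg ->
  is_derive x (1 : R) (fun t => f t * g t) (f x * dg + g x * df).
Proof. by move=> Hf Hg; exact: is_deriveM. Qed.

Lemma is_derive_scale x (c : R) f df : is_derive x (1 : R) f df ->
  is_derive x (1 : R) (fun t => c * f t) (c * df).
Proof. by move=> Hf; exact: is_deriveZ. Qed.

Lemma is_derive_bigsum x n (F : 'I_n -> R -> R) (dF : 'I_n -> R) :
  (forall i, is_derive x (1 : R) (F i) (dF i)) ->
  is_derive x (1 : R) (fun t => \sum_(i < n) F i t) (\sum_(i < n) dF i).
Proof.
move=> H; have -> : (fun t => \sum_(i < n) F i t) = \sum_(i < n) F i.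
  by apply: funext => t; rewrite fct_sumE.
exact: is_derive_sum.
Qed.

Lemma is_derive_translate x (c : R) f df : is_derive (x - c) (1 : R) f df ->
  is_derive x (1 : R) (fun t => f (t - c)) df.
Proof.
have E : (fun h : R => h^-1 *: (((fun t => f (t - c)) \o shift x) (h *: 1) - f (x - c)))
   = (fun h : R => h^-1 *: ((f \o shift (x - c)) (h *: 1) - f (x - c))).
  by apply: funext => h /=; rewrite addrA.
by case=> d1 d2; split; [rewrite /derivable E | rewrite /derive E -d2].
Qed.

End derivatives.

Section integrals.
Context {R : realType}.
Implicit Types (f F : R -> R).
Notation mu := (@lebesgue_measure R).

Lemma continuous_segment_integrable (a b : R) f : {within `[a, b], continuous f} ->
  mu.-integrable `[a, b] (EFin \o f).
Proof.
by move=> cf; apply: continuous_compact_integrable => //; exact: segment_compact.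
Qed.

Lemma fine_lebesgue_measure_itv (a b : R) : a <= b -> fine (mu `[a, b]) = b - a.
Proof.
rewrite le_eqVlt => /predU1P[<-|ab].
  by rewrite set_itv1 lebesgue_measure_set1 subrr.
by rewrite lebesgue_measure_itv /= lte_fin ab -EFinD.
Qed.

Lemma Rintegral_sum (a b : R) n (G : 'I_n -> R -> R) :
  (forall i, {within `[a, b], continuous (G i)}) ->
  \int[mu]_(t in `[a, b]) (\sum_(i < n) G i t) =
  \sum_(i < n) \int[mu]_(t in `[a, b]) G i t.
Proof.
elim: n G => [|n IH] G cG.
  under eq_Rintegral do rewrite big_ord0.
  by rewrite big_ord0 Rintegral_cst // mul0r.
under eq_Rintegral do rewrite big_ord_recr /=.
rewrite RintegralD //; last 2 first.
- apply/continuous_segment_integrable/within_continuous_sum => i; exact: cG.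
- exact/continuous_segment_integrable/cG.
rewrite big_ord_recr /=; congr (_ + _).
exact: (IH (fun i => G (widen_ord (leqnSn n) i))).
Qed.

(* Cauchy-Schwarz, from the nonnegativity of the variance of f on [a, b]. *)
Lemma sqr_Rintegral_le (a b : R) f : a < b -> {within `[a, b], continuous f} ->
  (\int[mu]_(t in `[a, b]) f t) ^+ 2 <= (b - a) * \int[mu]_(t in `[a, b]) (f t ^+ 2).
Proof.
move=> ab cf; have ba_gt0 : 0 < b - a by rewrite subr_gt0.
set I := \int[mu]_(t in _) f t; set J := \int[mu]_(t in _) (f t ^+ 2).
set m := I / (b - a).
have int_cf c : mu.-integrable `[a, b] (EFin \o (fun t => c * f t)).
  exact/continuous_segment_integrable/within_continuousMl.
have int_sqr : mu.-integrable `[a, b] (EFin \o (fun t => f t ^+ 2)).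
  exact/continuous_segment_integrable/within_continuous_sqr.
have var_ge0 : 0 <= \int[mu]_(t in `[a, b]) ((f t - m) ^+ 2).
  by apply: Rintegral_ge0 => t _; exact: sqr_ge0.
have varE : \int[mu]_(t in `[a, b]) ((f t - m) ^+ 2) = J - I ^+ 2 / (b - a).
  have -> : (fun t => (f t - m) ^+ 2) = (fun t => (f t ^+ 2 - (2 * m) * f t) + m ^+ 2).
    by apply: funext => t; ring.
  have int_diff : mu.-integrable `[a, b] (EFin \o (fun t => f t ^+ 2 - 2 * m * f t)).
    apply: continuous_segment_integrable; apply: within_continuousB.
      exact: within_continuous_sqr.
    exact: within_continuousMl.
  have int_cst : mu.-integrable `[a, b] (EFin \o (fun=> m ^+ 2)).
    exact/continuous_segment_integrable/within_continuous_cst.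
  rewrite RintegralD // RintegralB // ?int_cf // RintegralZl ?continuous_segment_integrable //.
  rewrite Rintegral_cst // fine_lebesgue_measure_itv ?ltW // -/I -/J /m.
  by field; rewrite gt_eqF.
by move: var_ge0; rewrite varE subr_ge0 ler_pdivrMr // mulrC.
Qed.

Lemma Rintegral_antiderivative (a b : R) f F : a < b ->
  {within `[a, b], continuous f} -> {within `[a, b], continuous F} ->
  (forall t, a < t < b -> derivable F t 1 /\ derive1 F t = f t) ->
  \int[mu]_(t in `[a, b]) f t = F b - F a.
Proof.
move=> ab cf cF dF.
have [cFi cFa cFb] := (continuous_within_itvP _ ab).1 cF.
have dF' : derivable_oo_LRcontinuous F a b.
  by split => // t; rewrite in_itv /= => /dF[].
rewrite /Rintegral (continuous_FTC2 ab cf dF') //.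
by move=> t; rewrite in_itv /= => /dF[].
Qed.

Lemma parameterized_integral_derive (a b u : R) f :
  {within `[a, b], continuous f} -> a < u -> u < b ->
  is_derive u (1 : R) (fun s => parameterized_integral mu a s f) (f u).
Proof.
move=> cf au ub.
have fu : {for u, continuous f}.
  apply: (@within_continuous_continuous _ _ _ a b) => //.
    exact: lt_trans ub.
  by rewrite in_itv /= au.
have [? <-] := continuous_FTC1_closed ub (continuous_segment_integrable cf) au fu.
exact: derivable_is_derive1.
Qed.

Lemma parameterized_integral_ge0 (a u : R) f :
  (forall t, a <= t -> 0 <= f t) -> 0 <= parameterized_integral mu a u f.
Proof.
by move=> f0; apply: Rintegral_ge0 => t; rewrite /= in_itv /= => /andP[/f0].
Qed.

Lemma parameterized_integralxx (a : R) f : parameterized_integral mu a a f = 0.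
Proof. by rewrite /parameterized_integral set_itv1 Rintegral_set1. Qed.

End integrals.

Section finite_sums.
Context {R : realFieldType}.

Lemma sum_ord_const n (c : R) : \sum_(i < n) c = n%:R * c.
Proof. by rewrite sumr_const card_ord mulr_natl. Qed.

Lemma sum_ge_term n (F : 'I_n -> R) i0 :
  (forall i, 0 <= F i) -> F i0 <= \sum_(i < n) F i.
Proof. by move=> F0; rewrite (bigD1 i0) //= lerDl sumr_ge0. Qed.

Lemma sum_ge_two_terms n (F : 'I_n -> R) i0 j0 : i0 != j0 ->
  (forall i, 0 <= F i) -> F i0 + F j0 <= \sum_(i < n) F i.
Proof.
move=> ij F0; rewrite (bigD1 i0) //= (bigD1 j0) 1?eq_sym //=.
by rewrite addrA lerDl sumr_ge0.
Qed.

Lemma sum_pair_diff_mul n (a g : 'I_n -> R) :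
  \sum_(i < n) \sum_(j < n) (a i - a j) * (g i - g j) =
  2 * (n%:R * \sum_(i < n) a i * g i - (\sum_(i < n) a i) * \sum_(i < n) g i).
Proof.
have -> : \sum_(i < n) \sum_(j < n) (a i - a j) * (g i - g j) =
    \sum_(i < n) (n%:R * (a i * g i) + \sum_(j < n) a j * g j
                  - a i * \sum_(j < n) g j - g i * \sum_(j < n) a j).
  apply: eq_bigr => i _.
  rewrite -sum_ord_const !mulr_sumr -big_split /= -!sumrB.
  by apply: eq_bigr => j _; ring.
rewrite !sumrB big_split /= sum_ord_const -!mulr_sumr -!mulr_suml; ring.
Qed.

Lemma sqr_sum_le n (y : 'I_n -> R) :
  (\sum_(i < n) y i) ^+ 2 <= n%:R * \sum_(i < n) y i ^+ 2.
Proof.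
have : 0 <= \sum_(i < n) \sum_(j < n) (y i - y j) * (y i - y j).
  by do 2!(apply: sumr_ge0 => ? _); rewrite -expr2 sqr_ge0.
rewrite sum_pair_diff_mul pmulr_rge0 // subr_ge0 expr2.
by move=> h; under [X in _ <= _ * X]eq_bigr do rewrite expr2.
Qed.

Lemma sum_antisym_eq0 n (F : 'I_n -> 'I_n -> R) :
  (forall i j, F j i = - F i j) -> \sum_(i < n) \sum_(j < n) F i j = 0.
Proof.
move=> FN; apply/eqP; rewrite -[_ == 0](@mulrn_eq0 _ _ 2) mulr2n.
rewrite [X in _ + X == 0]exchange_big /= -big_split big1 // => i _.
by rewrite -big_split big1 // => j _ /=; rewrite (FN i j) subrr.
Qed.

Lemma sum_pair_diff_mul_consensus n (a b : 'I_n -> R) (p : 'I_n -> 'I_n -> R) (c : R) :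
  (forall i j, p i j = p j i) ->
  let G i := c * \sum_(j < n) p i j * (b j - b i) in
  \sum_(i < n) \sum_(j < n) (a i - a j) * (G i - G j) =
  n%:R * c * \sum_(i < n) \sum_(j < n) p i j * ((a i - a j) * (b j - b i)).
Proof.
move=> p_sym G.
have sumG : \sum_(i < n) G i = 0.
  rewrite /G -mulr_sumr sum_antisym_eq0 ?mulr0 // => i j.
  by rewrite p_sym; ring.
have symmetrize : \sum_(i < n) \sum_(j < n) p i j * ((a i - a j) * (b j - b i)) =
    2 * \sum_(i < n) \sum_(j < n) p i j * (a i * (b j - b i)).
  rewrite mulr2n mulrDl mul1r [X in _ = _ + X]exchange_big -big_split /=.
  apply: eq_bigr => i _; rewrite -big_split /=.
  by apply: eq_bigr => j _; rewrite (p_sym j i); ring.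
rewrite sum_pair_diff_mul sumG mulr0 subr0 symmetrize /G.
have -> : \sum_(i < n) a i * (c * \sum_(j < n) p i j * (b j - b i)) =
    c * \sum_(i < n) \sum_(j < n) p i j * (a i * (b j - b i)).
  rewrite mulr_sumr; apply: eq_bigr => i _.
  by rewrite !mulr_sumr; apply: eq_bigr => j _; ring.
ring.
Qed.

Lemma weighted_mul_le (p a b : R) : 0 <= p -> p <= 1 ->
  p * (a * b) <= 2^-1 * a ^+ 2 + 2^-1 * b ^+ 2.
Proof.
move=> p0 p1.
have h1 : 0 <= p * (a - b) ^+ 2 by rewrite mulr_ge0 ?sqr_ge0.
have h2 : 0 <= (1 - p) * (a ^+ 2 + b ^+ 2).
  by apply: mulr_ge0; [lra | rewrite addr_ge0 ?sqr_ge0].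
nra.
Qed.

(* Writing a = b + (a - b), the product (ai - aj) (bj - bi) is
   - (bj - bi)^2 plus an error controlled by the increments ai - bi, aj - bj. *)
Lemma weighted_lag_mul_le (p ai aj bi bj : R) : 0 <= p -> p <= 1 ->
  p * ((ai - aj) * (bj - bi)) <=
  - (2^-1 * p * (bj - bi) ^+ 2) + (ai - bi) ^+ 2 + (aj - bj) ^+ 2.
Proof.
move=> p0 p1; set e := (ai - bi) - (aj - bj).
have h1 : 0 <= p * ((bj - bi) - e) ^+ 2 by rewrite mulr_ge0 ?sqr_ge0.
have h2 : 0 <= (1 - p) * e ^+ 2 by apply: mulr_ge0; [lra | rewrite sqr_ge0].
have h3 : 0 <= ((ai - bi) + (aj - bj)) ^+ 2 by rewrite sqr_ge0.
rewrite /e in h1 h2; nra.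
Qed.

End finite_sums.

Section triple_sums.
Context {R : realFieldType} (m n p : nat).
Implicit Types (F G : 'I_m -> 'I_n -> 'I_p -> R).

Lemma mulr_sum3 (c : R) F :
  c * \sum_(i < m) \sum_(j < n) \sum_(k < p) F i j k =
  \sum_(i < m) \sum_(j < n) \sum_(k < p) c * F i j k.
Proof.
rewrite mulr_sumr; apply: eq_bigr => i _; rewrite mulr_sumr.
by apply: eq_bigr => j _; rewrite mulr_sumr.
Qed.

Lemma exchange_sum3 F :
  \sum_(i < m) \sum_(j < n) \sum_(k < p) F i j k =
  \sum_(k < p) \sum_(i < m) \sum_(j < n) F i j k.
Proof. by rewrite [RHS]exchange_big /=; apply: eq_bigr => i _; rewrite exchange_big. Qed.

Lemma sum3D F G :
  \sum_(i < m) \sum_(j < n) \sum_(k < p) F i j k +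
  \sum_(i < m) \sum_(j < n) \sum_(k < p) G i j k =
  \sum_(i < m) \sum_(j < n) \sum_(k < p) (F i j k + G i j k).
Proof.
rewrite -big_split; apply: eq_bigr => i _; rewrite -big_split.
by apply: eq_bigr => j _; rewrite -big_split.
Qed.

Lemma ler_sum3 F G : (forall i j k, F i j k <= G i j k) ->
  \sum_(i < m) \sum_(j < n) \sum_(k < p) F i j k <=
  \sum_(i < m) \sum_(j < n) \sum_(k < p) G i j k.
Proof. by move=> FG; do 3!(apply: ler_sum => ? _); exact: FG. Qed.

End triple_sums.

Section euclidean_norm.
Context {R : realType} {d : nat}.
Implicit Types (u e w : 'I_d -> R).

Lemma enorm_ge0 u : 0 <= enorm u.
Proof. exact: sqrtr_ge0. Qed.

Lemma enorm_sqr u : enorm u ^+ 2 = \sum_(k < d) u k ^+ 2.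
Proof. by rewrite /enorm sqr_sqrtr // sumr_ge0 // => k _; exact: sqr_ge0. Qed.

Lemma dot_unit_le_enorm e w : \sum_(k < d) e k ^+ 2 = 1 ->
  \sum_(k < d) e k * w k <= enorm w.
Proof.
move=> e_unit; have [w0|w_neq0] := eqVneq (enorm w) 0.
  suff wk k : w k = 0 by rewrite w0 big1 // => k _; rewrite wk mulr0.
  apply/eqP; rewrite -sqrf_eq0 eq_le sqr_ge0 andbT.
  have : w k ^+ 2 <= enorm w ^+ 2.
    by rewrite enorm_sqr; apply: (@sum_ge_term _ d (fun k => w k ^+ 2)) => ?; exact: sqr_ge0.
  by rewrite w0 expr0n.
have w_gt0 : 0 < enorm w by rewrite lt_def w_neq0 enorm_ge0.
have : 0 <= \sum_(k < d) (enorm w * e k - w k) ^+ 2 by apply: sumr_ge0 => k _; exact: sqr_ge0.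
have -> : \sum_(k < d) (enorm w * e k - w k) ^+ 2 =
    enorm w ^+ 2 * \sum_(k < d) e k ^+ 2 - 2 * enorm w * \sum_(k < d) e k * w k
    + \sum_(k < d) w k ^+ 2.
  by rewrite !mulr_sumr -sumrB -big_split /=; apply: eq_bigr => k _; ring.
rewrite e_unit -enorm_sqr.
have -> : enorm w ^+ 2 * 1 - 2 * enorm w * \sum_(k < d) e k * w k + enorm w ^+ 2 =
    2 * enorm w * (enorm w - \sum_(k < d) e k * w k) by ring.
by rewrite pmulr_rge0 ?mulr_gt0 // subr_ge0.
Qed.

End euclidean_norm.

Section delayed_cucker_smale.
Variables (R : realType) (N d : nat) (lam tau : R) (psi : R -> R)
  (x v : 'I_N -> 'I_d -> R -> R).
Hypotheses (N_gt0 : (0 < N)%N) (lam_gt0 : 0 < lam) (tau_gt0 : 0 < tau)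
  (lam_tau_le : lam * tau <= 2^-1)
  (psi_range : forall r, 0 <= r -> 0 < psi r /\ psi r <= 1)
  (psi_cont : {within `[0, +oo[, continuous psi})
  (x_cont : forall i k, {within `[- tau, +oo[, continuous (x i k)})
  (v_cont : forall i k, {within `[- tau, +oo[, continuous (v i k)})
  (x_deriv : forall i k t, 0 < t ->
     derivable (x i k) t 1 /\ derive1 (x i k) t = v i k t)
  (v_deriv : forall i k t, 0 < t ->
     derivable (v i k) t 1 /\
     derive1 (v i k) t = lam / N%:R * \sum_(j < N)
        psi (enorm (posdiff x i j (t - tau))) * (v j k (t - tau) - v i k (t - tau))).

Notation mu := (@lebesgue_measure R).
Let history : set R := `[- tau, +oo[.

Definition weight i j t := psi (enorm (posdiff x i j t)).

Definition Vel t :=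
  2^-1 * \sum_(i < N) \sum_(j < N) \sum_(k < d) (v i k t - v j k t) ^+ 2.

Definition Dis t := 2^-1 * \sum_(i < N) \sum_(j < N)
  (weight i j t * \sum_(k < d) (v j k t - v i k t) ^+ 2).

Definition force i k t := lam / N%:R *
  \sum_(j < N) weight i j (t - tau) * (v j k (t - tau) - v i k (t - tau)).

Lemma VCS_Vel t : VCS v t = Vel t.
Proof.
rewrite /VCS /Vel; congr (_ * _); apply: eq_bigr => i _; apply: eq_bigr => j _.
by rewrite enorm_sqr.
Qed.

Lemma DCS_Dis t : DCS x v psi t = Dis t.
Proof.
rewrite /DCS /Dis; congr (_ * _); apply: eq_bigr => i _; apply: eq_bigr => j _.
by rewrite enorm_sqr.
Qed.

Lemma weight_ge0 i j t : 0 <= weight i j t.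
Proof. exact/ltW/(psi_range (enorm_ge0 _)).1. Qed.

Lemma weight_le1 i j t : weight i j t <= 1.
Proof. exact: (psi_range (enorm_ge0 _)).2. Qed.

Lemma weight_sym i j t : weight i j t = weight j i t.
Proof.
rewrite /weight /enorm /posdiff; congr (psi (Num.sqrt _)).
by apply: eq_bigr => k _; ring.
Qed.

Lemma Vel_ge0 t : 0 <= Vel t.
Proof. by rewrite mulr_ge0 //; do 3!(apply: sumr_ge0 => ? _); exact: sqr_ge0. Qed.

Lemma Dis_ge0 t : 0 <= Dis t.
Proof.
rewrite mulr_ge0 // sumr_ge0 // => i _; apply: sumr_ge0 => j _.
by rewrite mulr_ge0 ?weight_ge0 // sumr_ge0 // => k _; exact: sqr_ge0.
Qed.

Lemma Dis_le_Vel t : Dis t <= Vel t.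
Proof.
rewrite ler_pM2l ?invr_gt0 ?ltr0n //.
apply: ler_sum => i _; apply: ler_sum => j _.
have -> : \sum_(k < d) (v j k t - v i k t) ^+ 2 = \sum_(k < d) (v i k t - v j k t) ^+ 2.
  by apply: eq_bigr => k _; ring.
by rewrite ler_piMl ?weight_le1 // sumr_ge0 // => k _; exact: sqr_ge0.
Qed.

Lemma weight_cont i j : {within history, continuous (weight i j)}.
Proof.
apply: (@within_continuous_comp_sub _ history `[0, +oo[ psi
  (fun t => enorm (posdiff x i j t))) => //.
  apply/within_continuous_sqrt/within_continuous_sum => k.
  by apply/within_continuous_sqr/within_continuousB; exact: x_cont.
by move=> t _; rewrite /= in_itv /= andbT enorm_ge0.
Qed.

Lemma Vel_cont : {within history, continuous Vel}.
Proof.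
apply: within_continuousMl; do 3!(apply: within_continuous_sum => ?).
by apply/within_continuous_sqr/within_continuousB; exact: v_cont.
Qed.

Lemma Dis_cont : {within history, continuous Dis}.
Proof.
apply: within_continuousMl; do 2!(apply: within_continuous_sum => ?).
apply: within_continuousM; first exact: weight_cont.
apply: within_continuous_sum => ?.
by apply/within_continuous_sqr/within_continuousB; exact: v_cont.
Qed.

Lemma within_continuous_delay (f : R -> R) : {within history, continuous f} ->
  {within `[0, +oo[, continuous (fun t => f (t - tau))}.
Proof.
move=> cf; apply: (within_continuous_shift cf) => t.
rewrite /history /= !in_itv /= !andbT; lra.
Qed.

Lemma force_cont i k : {within `[0, +oo[, continuous (force i k)}.
Proof.
apply: within_continuousMl; apply: within_continuous_sum => j.
apply: (@within_continuousM _ _ (fun t => weight i j (t - tau))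
   (fun t => v j k (t - tau) - v i k (t - tau))).
  exact/within_continuous_delay/weight_cont.
by apply: within_continuousB; exact/within_continuous_delay/v_cont.
Qed.

Lemma x_is_derive i k (t : R) : 0 < t -> is_derive t (1 : R) (x i k) (v i k t).
Proof. by move=> /(x_deriv i k) [dx <-]; exact: derivable_is_derive1. Qed.

Lemma v_is_derive i k (t : R) : 0 < t -> is_derive t (1 : R) (v i k) (force i k t).
Proof. by move=> /(v_deriv i k) [dv Ev]; rewrite /force; rewrite -Ev; exact: derivable_is_derive1. Qed.

Definition dVel t := lam * \sum_(i < N) \sum_(j < N) \sum_(k < d)
  weight i j (t - tau) * ((v i k t - v j k t) * (v j k (t - tau) - v i k (t - tau))).

Lemma Vel_is_derive (t : R) : 0 < t -> is_derive t (1 : R) Vel (dVel t).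
Proof.
move=> t_gt0; have dv i k := v_is_derive i k t_gt0.
have -> : dVel t = 2^-1 * \sum_(i < N) \sum_(j < N) \sum_(k < d)
    ((v i k t - v j k t) * (force i k t - force j k t) +
     (v i k t - v j k t) * (force i k t - force j k t)).
  transitivity (\sum_(i < N) \sum_(j < N) \sum_(k < d)
      (v i k t - v j k t) * (force i k t - force j k t)); last first.
    by rewrite mulr_sum3; do 3!(apply: eq_bigr => ? _); field.
  rewrite /dVel exchange_sum3 [RHS]exchange_sum3 mulr_sumr; apply: eq_bigr => k _.
  have := @sum_pair_diff_mul_consensus R N (fun i => v i k t) (fun i => v i k (t - tau))
    (fun i j => weight i j (t - tau)) (lam / N%:R) (fun i j => weight_sym i j (t - tau)).
  rewrite /= => ->.
  have -> : N%:R * (lam / N%:R) = lam by field; rewrite pnatr_eq0 -lt0n.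
  by rewrite mulr_sumr; apply: eq_bigr => i _; rewrite mulr_sumr.
apply: is_derive_scale; do 3!(apply: is_derive_bigsum => ?).
exact: is_derive_mul (is_derive_sub (dv _ _) (dv _ _)) (is_derive_sub (dv _ _) (dv _ _)).
Qed.

Lemma dVel_le_Vel_delay t : dVel t <= lam * (Vel t + Vel (t - tau)).
Proof.
rewrite ler_pM2l // /Vel !mulr_sum3 sum3D; apply: ler_sum3 => i j k.
have -> : (v i k (t - tau) - v j k (t - tau)) ^+ 2 =
    (v j k (t - tau) - v i k (t - tau)) ^+ 2 by ring.
exact: weighted_mul_le (weight_ge0 _ _ _) (weight_le1 _ _ _).
Qed.


Lemma dVel_le_dissipation t : dVel t <= - lam * Dis (t - tau) +
  2 * lam * N%:R * \sum_(i < N) \sum_(k < d) (v i k t - v i k (t - tau)) ^+ 2.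
Proof.
set s := t - tau; set incr := \sum_(i < N) \sum_(k < d) (v i k t - v i k s) ^+ 2.
have dis : \sum_(i < N) \sum_(j < N) \sum_(k < d)
    - (2^-1 * weight i j s * (v j k s - v i k s) ^+ 2) = - Dis s.
  rewrite /Dis -mulNr mulr_sumr; apply: eq_bigr => i _; rewrite mulr_sumr.
  by apply: eq_bigr => j _; rewrite !mulr_sumr; apply: eq_bigr => k _; ring.
have incr_pair : \sum_(i < N) \sum_(j < N) \sum_(k < d) (v i k t - v i k s) ^+ 2 +
    \sum_(i < N) \sum_(j < N) \sum_(k < d) (v j k t - v j k s) ^+ 2 = 2 * N%:R * incr.
  rewrite sum_ord_const -/incr.
  have -> : \sum_(i < N) \sum_(j < N) \sum_(k < d) (v i k t - v i k s) ^+ 2 = N%:R * incr.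
    by rewrite /incr mulr_sumr; apply: eq_bigr => i _; rewrite sum_ord_const.
  ring.
apply: (@le_trans _ _ (lam * \sum_(i < N) \sum_(j < N) \sum_(k < d)
    (- (2^-1 * weight i j s * (v j k s - v i k s) ^+ 2) + (v i k t - v i k s) ^+ 2
     + (v j k t - v j k s) ^+ 2))).
  rewrite ler_pM2l //; apply: ler_sum3 => i j k.
  exact: weighted_lag_mul_le (weight_ge0 _ _ _) (weight_le1 _ _ _).
rewrite -!sum3D dis -addrA incr_pair.
by have -> : lam * (- Dis s + 2 * N%:R * incr) =
  - lam * Dis s + 2 * lam * N%:R * incr by ring.
Qed.

Lemma sqr_force_le r :
  \sum_(i < N) \sum_(k < d) force i k r ^+ 2 <= 2 * lam ^+ 2 / N%:R * Dis (r - tau).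
Proof.
set s := r - tau; set c := lam / N%:R.
have -> : 2 * lam ^+ 2 / N%:R * Dis s = c ^+ 2 * N%:R *
    \sum_(i < N) \sum_(j < N) \sum_(k < d) weight i j s * (v j k s - v i k s) ^+ 2.
  have -> : \sum_(i < N) \sum_(j < N) \sum_(k < d) weight i j s * (v j k s - v i k s) ^+ 2 =
      \sum_(i < N) \sum_(j < N) (weight i j s * \sum_(k < d) (v j k s - v i k s) ^+ 2).
    by apply: eq_bigr => i _; apply: eq_bigr => j _; rewrite mulr_sumr.
  by rewrite /Dis /c; field; rewrite pnatr_eq0 -lt0n.
rewrite mulr_sum3; apply: ler_sum => i _.
rewrite [leRHS]exchange_big /=; apply: ler_sum => k _.
rewrite -mulr_sumr /force -/s -/c exprMn -mulrA ler_wpM2l ?sqr_ge0 //.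
apply: le_trans (sqr_sum_le _) _.
rewrite ler_wpM2l ?ler0n //; apply: ler_sum => j _.
rewrite exprMn ler_wpM2r ?sqr_ge0 // expr2.
by rewrite ler_piMl ?weight_ge0 ?weight_le1.
Qed.

Lemma two_lam_tau_le1 : 2 * (lam * tau) <= 1.
Proof.
have two_half : (2 : R) * 2^-1 = 1 by rewrite mulfV // pnatr_eq0.
by rewrite -[X in _ <= X]two_half ler_pM2l.
Qed.

Definition Vmax := sup (VCS v @` `[- tau, 0]).

Lemma Vel_le_Vmax s : - tau <= s -> s <= 0 -> Vel s <= Vmax.
Proof.
move=> s_ge s_le0.
have cV : {within `[- tau, 0], continuous Vel}.
  by apply: continuous_subspaceW Vel_cont; exact: subset_itvl.
have tau_le0 : - tau <= 0 by rewrite oppr_le0 ltW.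
have [c _ Vc_max] := EVT_max tau_le0 cV.
rewrite -VCS_Vel; apply: ub_le_sup.
  by exists (Vel c) => _ [z z_in <-]; rewrite VCS_Vel; exact: Vc_max.
by exists s => //; rewrite /= in_itv /= s_ge s_le0.
Qed.

Lemma Vmax_ge0 : 0 <= Vmax.
Proof. by apply: le_trans (Vel_ge0 0) (Vel_le_Vmax _ _) => //; rewrite oppr_le0 ltW. Qed.


Lemma Vel_first_delay t : 0 <= t -> t <= tau ->
  Vel t <= (1 + 4 * (lam * tau)) * Vmax.
Proof.
move=> t_ge0 t_le.
have cV : {within `[0, tau], continuous Vel}.
  apply: continuous_subspaceW Vel_cont => y; rewrite /= !in_itv /= => /andP[y0 _].
  by rewrite /history /= in_itv /= andbT (le_trans _ y0) // oppr_le0 ltW.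
have [c] := EVT_max (ltW tau_gt0) cV; rewrite in_itv /= => /andP[c_ge0 c_le] Vc_max.
apply: le_trans (Vc_max t _) _; first by rewrite in_itv /= t_ge0 t_le.
have M_ge0 := Vmax_ge0; have a_gt0 : 0 < lam * tau by rewrite mulr_gt0.
have V0_le : Vel 0 <= Vmax by apply: Vel_le_Vmax => //; rewrite oppr_le0 ltW.
move: c_ge0; rewrite le_eqVlt => /predU1P[<-|c_gt0]; first nra.
have cV0c : {within `[0, c], continuous Vel}.
  by apply: continuous_subspaceW cV; exact: subset_itvl.
have dV y : y \in `]0, c[ -> is_derive y (1 : R) Vel (dVel y).
  by rewrite in_itv /= => /andP[y_gt0 _]; exact: Vel_is_derive.
have [xi] := MVT c_gt0 dV cV0c; rewrite in_itv /= subr0 => /andP[xi_gt0 xi_lt] Vel_incr.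
have dV_le : dVel xi <= lam * (Vel c + Vmax).
  apply: le_trans (dVel_le_Vel_delay xi) _; rewrite ler_pM2l // lerD //.
    by apply: Vc_max; rewrite in_itv /= !ltW // (lt_le_trans xi_lt).
  by apply: Vel_le_Vmax; lra.
have growth : dVel xi * c <= lam * (Vel c + Vmax) * tau.
  have Vc_M_ge0 : 0 <= lam * (Vel c + Vmax) by rewrite mulr_ge0 ?addr_ge0 ?Vel_ge0 // ltW.
  apply: (@le_trans _ _ (lam * (Vel c + Vmax) * c)); first by rewrite ler_wpM2r // ltW.
  by rewrite ler_wpM2l.
(* with a = lam tau <= 1/2: V (1 - a) <= M (1 + a) <= (1 + 4 a) (1 - a) M *)
have := two_lam_tau_le1; have := Vel_ge0 c.
have : 0 <= Vmax * (lam * tau * (1 - 2 * (lam * tau))).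
  by rewrite !mulr_ge0 ?subr_ge0 ?two_lam_tau_le1 // ltW.
nra.
Qed.


Definition Dlag r := Dis (r - tau).
Definition Dint u := parameterized_integral mu 0 u Dlag.
Definition Dint2 u := parameterized_integral mu 0 u Dint.

Lemma Dlag_cont b : {within `[0, b], continuous Dlag}.
Proof.
apply: continuous_subspaceW (within_continuous_delay Dis_cont) => y.
by rewrite /= !in_itv /= => /andP[->].
Qed.

Lemma Dint_cont b : 0 <= b -> {within `[0, b], continuous Dint}.
Proof.
by move=> b_ge0; apply: parameterized_integral_continuous => //;
  exact/continuous_segment_integrable/Dlag_cont.
Qed.

Lemma Dint2_cont b : 0 <= b -> {within `[0, b], continuous Dint2}.
Proof.
by move=> b_ge0; apply: parameterized_integral_continuous => //;
  exact/continuous_segment_integrable/Dint_cont.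
Qed.

Lemma Dint_is_derive (u : R) : 0 < u -> is_derive u (1 : R) Dint (Dlag u).
Proof.
move=> u_gt0; have u_lt : u < u + 1 by rewrite ltrDl.
exact: parameterized_integral_derive (@Dlag_cont (u + 1)) u_gt0 u_lt.
Qed.

Lemma Dint2_is_derive (u : R) : 0 < u -> is_derive u (1 : R) Dint2 (Dint u).
Proof.
move=> u_gt0; have u_lt : u < u + 1 by rewrite ltrDl.
apply: (parameterized_integral_derive _ u_gt0 u_lt).
by apply: Dint_cont; rewrite addr_ge0 // ltW.
Qed.

Lemma Dint_ge0 u : 0 <= Dint u.
Proof. by apply: parameterized_integral_ge0 => t _; exact: Dis_ge0. Qed.

Lemma Dint2_ge0 u : 0 <= Dint2 u.
Proof. by apply: parameterized_integral_ge0 => t _; exact: Dint_ge0. Qed.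

Lemma Dint_le a b : 0 <= a -> a <= b -> Dint a <= Dint b.
Proof.
move=> a_ge0 ab.
have cP : {within `[a, b], continuous Dint}.
  by apply: continuous_subspaceW (Dint_cont (le_trans a_ge0 ab)); exact: subset_itvr.
have dP y : y \in `]a, b[ -> is_derive y (1 : R) Dint (Dlag y).
  by rewrite in_itv /= => /andP[ay _]; apply: Dint_is_derive; exact: le_lt_trans ay.
have [xi _ Dint_incr] := MVT_segment ab dP cP.
by rewrite -subr_ge0 Dint_incr mulr_ge0 ?subr_ge0 //; exact: Dis_ge0.
Qed.

Lemma Dint2_increment_le t : tau <= t -> Dint2 t - Dint2 (t - tau) <= tau * Dint t.
Proof.
move=> tau_le.
have a_ge0 : 0 <= t - tau by rewrite subr_ge0.
have ab : t - tau <= t by rewrite lerBlDr lerDl ltW.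
have cQ : {within `[t - tau, t], continuous Dint2}.
  by apply: continuous_subspaceW (Dint2_cont (le_trans a_ge0 ab)); exact: subset_itvr.
have dQ y : y \in `]t - tau, t[ -> is_derive y (1 : R) Dint2 (Dint y).
  by rewrite in_itv /= => /andP[ay _]; apply: Dint2_is_derive; exact: le_lt_trans ay.
have [xi] := MVT_segment ab dQ cQ; rewrite in_itv /= => /andP[xi_ge xi_le] ->.
rewrite opprB addrC subrK mulrC ler_pM2l //.
by apply: Dint_le => //; exact: le_trans xi_ge.
Qed.

Lemma Dint_tau_le : Dint tau <= tau * Vmax.
Proof.
apply: le_trans (_ : \int[mu]_(r in `[0, tau]) Vmax <= _).
  apply: le_Rintegral => //.
  - exact/continuous_segment_integrable/Dlag_cont.
  - exact/continuous_segment_integrable/within_continuous_cst.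
  move=> r; rewrite /= in_itv /= => /andP[r_ge0 r_le].
  by apply: le_trans (Dis_le_Vel _) (Vel_le_Vmax _ _); lra.
by rewrite Rintegral_cst // fine_lebesgue_measure_itv ?subr0 1?mulrC // ltW.
Qed.


Lemma window_sub t : tau <= t -> `[t - tau, t] `<=` `[0, +oo[.
Proof. by move=> tau_le y; rewrite /= !in_itv /= andbT => /andP[+ _]; apply: le_trans; rewrite subr_ge0. Qed.

Lemma window_sub_history t : tau <= t -> `[t - tau, t] `<=` history.
Proof.
move=> /window_sub sub y /sub; rewrite /history /= !in_itv /= !andbT.
by apply: le_trans; rewrite oppr_le0 ltW.
Qed.

Lemma sqr_v_increment_le i k t : tau <= t ->
  (v i k t - v i k (t - tau)) ^+ 2 <=
  tau * \int[mu]_(r in `[t - tau, t]) (force i k r ^+ 2).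
Proof.
move=> tau_le; have window : t - tau < t by rewrite ltrBlDr ltrDl.
have cF := continuous_subspaceW (window_sub tau_le) (@force_cont i k).
have -> : v i k t - v i k (t - tau) = \int[mu]_(r in `[t - tau, t]) force i k r.
  symmetry; apply: Rintegral_antiderivative window cF _ _.
    exact: continuous_subspaceW (window_sub_history tau_le) (@v_cont i k).
  by move=> y /andP[y_gt _]; apply: v_deriv; apply: le_lt_trans y_gt; rewrite subr_ge0.
by have := sqr_Rintegral_le window cF; rewrite (_ : t - (t - tau) = tau) //; ring.
Qed.

Lemma v_increment_le t : tau <= t ->
  \sum_(i < N) \sum_(k < d) (v i k t - v i k (t - tau)) ^+ 2 <=
  tau * (2 * lam ^+ 2 / N%:R) * (Dint t - Dint (t - tau)).
Proof.
move=> tau_le; have window : t - tau < t by rewrite ltrBlDr ltrDl.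
have t_ge0 : 0 <= t by apply: le_trans tau_le; exact: ltW.
have cF2 i k : {within `[t - tau, t], continuous (fun r => force i k r ^+ 2)}.
  exact/within_continuous_sqr/(continuous_subspaceW (window_sub tau_le) (@force_cont i k)).
have cDlag : {within `[t - tau, t], continuous Dlag}.
  by apply: continuous_subspaceW (@Dlag_cont t); apply: subset_itvr; rewrite bnd_simp subr_ge0.
have Dint_incr : Dint t - Dint (t - tau) = \int[mu]_(r in `[t - tau, t]) Dlag r.
  symmetry; apply: Rintegral_antiderivative window cDlag _ _.
    by apply: continuous_subspaceW (Dint_cont t_ge0); apply: subset_itvr; rewrite bnd_simp subr_ge0.
  move=> y /andP[y_gt _]; apply: is_derive_derive1; apply: Dint_is_derive.
  by apply: le_lt_trans y_gt; rewrite subr_ge0.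
apply: (@le_trans _ _ (tau *
    \int[mu]_(r in `[t - tau, t]) (\sum_(i < N) \sum_(k < d) force i k r ^+ 2))).
  rewrite Rintegral_sum; last by move=> i; apply: within_continuous_sum => k; exact: cF2.
  rewrite mulr_sumr; apply: ler_sum => i _.
  rewrite Rintegral_sum // mulr_sumr; apply: ler_sum => k _; exact: sqr_v_increment_le.
rewrite -mulrA ler_pM2l // Dint_incr -RintegralZl //; last first.
  exact: continuous_segment_integrable.
apply: le_Rintegral => //.
- apply: continuous_segment_integrable; apply: within_continuous_sum => i.
  by apply: within_continuous_sum => k; exact: cF2.
- exact/continuous_segment_integrable/within_continuousMl.
- by move=> r _; exact: sqr_force_le.
Qed.

Local Notation kappa := (4 * lam ^+ 3 * tau).

(* tau * Dint t - Dint2 t + Dint2 (t - tau) is the double integral of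
   Dis (r - tau) over t - tau <= s <= r <= t, the delay correction of the paper's
   Lyapunov functional. *)
Definition lyap t := Vel t + kappa * (tau * Dint t - Dint2 t + Dint2 (t - tau)).

Lemma lyap_is_derive (t : R) : tau < t ->
  is_derive t (1 : R) lyap (dVel t + kappa * (tau * Dlag t - Dint t + Dint (t - tau))).
Proof.
move=> tau_lt; have t_gt0 : 0 < t by exact: lt_trans tau_lt.
apply: is_derive_add; first exact: Vel_is_derive.
apply: is_derive_scale; apply: is_derive_add; first apply: is_derive_sub.
- by apply: is_derive_scale; exact: Dint_is_derive.
- exact: Dint2_is_derive.
- by apply: is_derive_translate; apply: Dint2_is_derive; rewrite subr_gt0.
Qed.

Lemma lyap_derive_le0 t : tau < t ->
  dVel t + kappa * (tau * Dlag t - Dint t + Dint (t - tau)) <= 0.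
Proof.
move=> tau_lt.
have incr_le : 2 * lam * N%:R * \sum_(i < N) \sum_(k < d) (v i k t - v i k (t - tau)) ^+ 2
    <= kappa * (Dint t - Dint (t - tau)).
  have -> : kappa * (Dint t - Dint (t - tau)) = 2 * lam * N%:R *
      (tau * (2 * lam ^+ 2 / N%:R) * (Dint t - Dint (t - tau))).
    by field; rewrite pnatr_eq0 -lt0n.
  by rewrite ler_pM2l ?v_increment_le ?ltW // !mulr_gt0 // ltr0n.
have absorb : 0 <= (lam - kappa * tau) * Dlag t.
  apply: mulr_ge0; last exact: Dis_ge0.
  have -> : lam - kappa * tau = lam * (1 - (2 * (lam * tau)) ^+ 2) by ring.
  have two_a_ge0 : 0 <= 2 * (lam * tau) by rewrite !mulr_ge0 // ltW.
  by rewrite mulr_ge0 ?subr_ge0 ?exprn_ile1 ?two_lam_tau_le1 // ltW.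
have := dVel_le_dissipation t; rewrite -/(Dlag t); nra.
Qed.

Lemma lyap_cont t : tau <= t -> {within `[tau, t], continuous lyap}.
Proof.
move=> tau_le; have t_ge0 : 0 <= t by apply: le_trans tau_le; exact: ltW.
have sub0 : `[tau, t] `<=` `[0, t] by apply: subset_itvr; rewrite bnd_simp ltW.
have sub_history : `[tau, t] `<=` history.
  move=> y; rewrite /history /= !in_itv /= andbT => /andP[+ _].
  by apply: le_trans; rewrite (le_trans _ (ltW tau_gt0)) // oppr_le0 ltW.
apply: within_continuousD; first exact: continuous_subspaceW sub_history Vel_cont.
apply: within_continuousMl; apply: within_continuousD; first apply: within_continuousB.
- exact/within_continuousMl/(continuous_subspaceW sub0 (Dint_cont t_ge0)).
- exact: continuous_subspaceW sub0 (Dint2_cont t_ge0).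
- apply: (within_continuous_shift (Dint2_cont t_ge0)) => y.
  rewrite /= !in_itv /= => /andP[y_ge y_le]; rewrite subr_ge0 y_ge /=.
  by rewrite lerBlDr (le_trans y_le) // lerDl ltW.
Qed.

Lemma Vel_after_first_delay t : tau < t ->
  Vel t <= (1 + 4 * (lam * tau) + 4 * (lam * tau) ^+ 3) * Vmax.
Proof.
move=> tau_lt.
have kappa_ge0 : 0 <= kappa by rewrite !mulr_ge0 // ?exprn_ge0 // ltW.
have Vel_le_lyap : Vel t <= lyap t.
  by rewrite lerDl mulr_ge0 //; have := Dint2_increment_le (ltW tau_lt); lra.
have lyap_noninc : lyap t <= lyap tau.
  apply: (@ler0_derive1_le_cc R lyap tau t).
  - by move=> y; rewrite in_itv /= => /andP[/lyap_is_derive/is_derive_derive1[]].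
  - move=> y; rewrite in_itv /= => /andP[tau_y _].
    by rewrite (is_derive_derive1 (lyap_is_derive tau_y)).2 lyap_derive_le0.
  - exact: lyap_cont (ltW tau_lt).
  - by rewrite in_itv /= lexx ltW.
  - by rewrite in_itv /= lexx ltW.
  - exact: ltW.
apply: le_trans Vel_le_lyap (le_trans lyap_noninc _).
rewrite /lyap subrr /Dint2 parameterized_integralxx addr0 -/(Dint2 tau).
have -> : (1 + 4 * (lam * tau) + 4 * (lam * tau) ^+ 3) * Vmax =
    (1 + 4 * (lam * tau)) * Vmax + kappa * (tau * (tau * Vmax)) by ring.
apply: lerD; first exact: Vel_first_delay (ltW tau_gt0) (lexx tau).
rewrite ler_wpM2l // lerBlDr; apply: le_trans (_ : tau * (tau * Vmax) <= _).
  by rewrite ler_wpM2l ?Dint_tau_le // ltW.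
by rewrite lerDl Dint2_ge0.
Qed.

Lemma Vel_bound t : 0 <= t ->
  Vel t <= (1 + 4 * (lam * tau) + 4 * (lam * tau) ^+ 3) * Vmax.
Proof.
move=> t_ge0; have [tau_lt|t_le] := ltP tau t; first exact: Vel_after_first_delay.
apply: le_trans (Vel_first_delay t_ge0 t_le) _; rewrite ler_wpM2r ?Vmax_ge0 // lerDl.
by rewrite mulr_ge0 // exprn_ge0 // mulr_ge0 // ltW.
Qed.


Lemma sqr_enorm_veldiff_le_Vel i j t : enorm (veldiff v i j t) ^+ 2 <= Vel t.
Proof.
pose S a b := \sum_(k < d) (v a k t - v b k t) ^+ 2.
have S_ge0 a b : 0 <= S a b by apply: sumr_ge0 => k _; exact: sqr_ge0.
rewrite enorm_sqr -/(S i j).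
have [<-|ij] := eqVneq i j.
  by rewrite /S big1 ?Vel_ge0 // => k _; rewrite subrr expr0n.
have S_sym : S j i = S i j by apply: eq_bigr => k _; ring.
have rows := @sum_ge_two_terms _ N (fun a => \sum_(b < N) S a b) i j ij
  (fun a => sumr_ge0 _ (fun b _ => S_ge0 a b)).
have := @sum_ge_term _ N (S i) j (S_ge0 i); have := @sum_ge_term _ N (S j) i (S_ge0 j).
by rewrite S_sym /Vel -/S; lra.
Qed.

Lemma Vmax_le_L0 : (2 * (lam * tau) + 1) * Vmax <= L0 x v psi lam tau.
Proof.
have int_ge0 : 0 <= Rintegral mu `[- tau, 0]
    (fun theta => Rintegral mu `[theta, 0] (DCS x v psi)).
  apply: Rintegral_ge0 => th _; apply: Rintegral_ge0 => r _.
  by have := Dis_ge0 r; rewrite -DCS_Dis.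
have exp_ge1 : 1 <= expR (2 * (lam * tau)).
  by apply: le_trans (expR_ge1Dx _); rewrite lerDl !mulr_ge0 // ltW.
apply: le_trans (_ : (2 * (lam * tau) + 1) * (expR (2 * (lam * tau)) * Vmax) <= _).
  apply: ler_wpM2l; first by rewrite addr_ge0 // !mulr_ge0 // ltW.
  by rewrite ler_peMl ?Vmax_ge0.
by rewrite /L0 !mulrA lerDl !mulr_ge0 // ?exprn_ge0 // ltW.
Qed.

Lemma enorm_veldiff_le i j t : 0 <= t ->
  enorm (veldiff v i j t) <= Num.sqrt (2 * L0 x v psi lam tau).
Proof.
move=> t_ge0; have M_ge0 := Vmax_ge0.
have a_gt0 : 0 < lam * tau by rewrite mulr_gt0.
have L0_ge := Vmax_le_L0.
have L0_ge0 : 0 <= L0 x v psi lam tau.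
  by apply: le_trans L0_ge; rewrite mulr_ge0 // addr_ge0 // mulr_ge0 // ltW.
rewrite -ler_sqr ?nnegrE ?sqrtr_ge0 ?enorm_ge0 // [X in _ <= X]sqr_sqrtr ?mulr_ge0 //.
apply: le_trans (sqr_enorm_veldiff_le_Vel i j t) _.
apply: le_trans (Vel_bound t_ge0) _.
have cube_le : 4 * (lam * tau) ^+ 3 <= 1.
  have := exprn_ile1 3 (ltW (mulr_gt0 (@ltr0Sn R 1) a_gt0)) two_lam_tau_le1.
  by rewrite exprMn (_ : (2 : R) ^+ 3 = 8); [nra | rewrite !exprS expr0; ring].
nra.
Qed.

Lemma posdiff_enorm_le i j t : 0 < t ->
  enorm (posdiff x i j t) <=
  enorm (posdiff x i j 0) + Num.sqrt (2 * L0 x v psi lam tau) * t.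
Proof.
move=> t_gt0; set n := enorm (posdiff x i j t); set c := Num.sqrt _.
have c_ge0 : 0 <= c := sqrtr_ge0 _.
have [->|n_neq0] := eqVneq n 0; first by rewrite addr_ge0 ?enorm_ge0 // mulr_ge0 // ltW.
have n_gt0 : 0 < n by rewrite lt_def n_neq0 enorm_ge0.
(* project onto the unit vector e pointing from x_j(t) to x_i(t) *)
pose e k := (x i k t - x j k t) / n.
have e_unit : \sum_(k < d) e k ^+ 2 = 1.
  rewrite /e; under eq_bigr do rewrite expr_div_n.
  by rewrite -mulr_suml -enorm_sqr divff // expf_neq0.
pose f r := \sum_(k < d) e k * (x i k r - x j k r).
have f_t : f t = n.
  rewrite /f /e; under eq_bigr do rewrite mulrAC -expr2.
  by rewrite -mulr_suml -enorm_sqr expr2 mulfK.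
have f_0 : f 0 <= enorm (posdiff x i j 0) := dot_unit_le_enorm _ e_unit.
pose df r := \sum_(k < d) e k * (v i k r - v j k r).
have df_le r : 0 <= r -> df r <= c.
  by move=> r_ge0; apply: le_trans (enorm_veldiff_le i j r_ge0); exact: dot_unit_le_enorm.
have dF y : y \in `]0, t[ -> is_derive y (1 : R) f (df y).
  rewrite in_itv /= => /andP[y_gt0 _].
  apply: is_derive_bigsum => k; apply: is_derive_scale.
  by apply: is_derive_sub; exact: x_is_derive.
have cF : {within `[0, t], continuous f}.
  have sub : `[0, t] `<=` history.
    move=> y; rewrite /history /= !in_itv /= andbT => /andP[+ _].
    by apply: le_trans; rewrite oppr_le0 ltW.
  apply: within_continuous_sum => k; apply: within_continuousMl.
  by apply: within_continuousB; exact: continuous_subspaceW sub (@x_cont _ _).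
have [xi] := MVT t_gt0 dF cF; rewrite in_itv /= subr0 f_t => /andP[xi_gt0 _] incr.
have -> : n = f 0 + df xi * t by rewrite -incr; ring.
have := df_le xi (ltW xi_gt0); have : 0 < t := t_gt0; nra.
Qed.

End delayed_cucker_smale.

Theorem lemma3p8 (R : realType) (N d : nat) (lambda tau : R) (psi : R -> R)
  (x v : 'I_N -> 'I_d -> R -> R) :
  (0 < N)%N -> (0 < d)%N ->
  0 < lambda -> 0 < tau -> lambda * tau <= 2^-1 ->
  (* psi : [0,oo) -> (0,oo), positive, nonincreasing, differentiable, <= 1 *)
  (forall r, 0 <= r -> 0 < psi r /\ psi r <= 1) ->
  (forall r s, 0 <= r -> r <= s -> psi s <= psi r) ->
  {within `[0, +oo[, continuous psi} ->
  (forall r, 0 < r -> derivable psi r 1) ->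
  (* the solution is continuous on [-tau, oo) *)
  (forall i k, {within `[- tau, +oo[, continuous (x i k)}) ->
  (forall i k, {within `[- tau, +oo[, continuous (v i k)}) ->
  (* initial data are C^1 on (-tau, 0) *)
  (forall i k t, - tau < t < 0 -> derivable (x i k) t 1 /\ derivable (v i k) t 1) ->
  (forall i k, {in `]- tau, 0[, continuous (derive1 (x i k))}) ->
  (forall i k, {in `]- tau, 0[, continuous (derive1 (v i k))}) ->
  (* the delayed Cucker-Smale system for t > 0 *)
  (forall i k t, 0 < t ->
     derivable (x i k) t 1 /\ derive1 (x i k) t = v i k t) ->
  (forall i k t, 0 < t ->
     derivable (v i k) t 1 /\
     derive1 (v i k) t = lambda / N%:R * \sum_(j < N)
        psi (enorm (posdiff x i j (t - tau))) * (v j k (t - tau) - v i k (t - tau))) ->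
  forall t, tau < t ->
    psi (dX x 0 + Num.sqrt (2 * L0 x v psi lambda tau) * t) <= phiCS x psi t.
Proof.
move=> N_gt0 _ lam_gt0 tau_gt0 lam_tau_le psi_range psi_noninc psi_cont _
  x_cont v_cont _ _ _ x_deriv v_deriv t tau_lt.
have t_gt0 : 0 < t := lt_trans tau_gt0 tau_lt.
have dX_ge0 : 0 <= dX x 0 by exact: bigmax_ge_id.
set r := dX x 0 + _; have r_ge0 : 0 <= r by rewrite addr_ge0 // mulr_ge0 ?sqrtr_ge0 // ltW.
apply: le_bigmin => [|i _]; first exact: (psi_range r r_ge0).2.
apply: le_bigmin => [|j _]; first exact: (psi_range r r_ge0).2.
apply: psi_noninc; first exact: enorm_ge0.
apply: le_trans (posdiff_enorm_le N_gt0 lam_gt0 tau_gt0 lam_tau_le psi_range psi_cont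
  x_cont v_cont x_deriv v_deriv i j t_gt0) _.
rewrite lerD2r; apply: le_trans (le_bigmax _ (fun j => enorm (posdiff x i j 0)) j) _.
exact: (le_bigmax _ (fun i => \big[Num.max/0]_(j < N) enorm (posdiff x i j 0)) i).
Qed.
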